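(* Suppose the system is DFS$_m$, and define $V:\mathbb{R}^n\to\mathbb{R}$ by $$V(x_0)=\inf_{\Psi\in\mathcal{C}^d_m}\ \sup_{\sigma\in\Sigma^\omega}\ \sum_{k=0}^{\infty}\|\phi(k,\sigma,x_0,\Psi)\|,$$ where $\mathcal{C}^d_m$ is the set of all functions $\mathcal{H}\to\mathbb{R}^m$. Then $V$ is a norm on $\mathbb{R}^n$, it satisfies $$V(x)=\|x\|+\max_{i\in\Sigma}\min_{u\in\mathbb{R}^m}V(A_ix+B_iu)\quad\text{for all }x\in\mathbb{R}^n$$ (the minima being attained), and any $\Phi_d:\Sigma\times\mathbb{R}^n\to\mathbb{R}^m$ with $\Phi_d(i,x)\in\arg\min_{u\in\mathbb{R}^m}V(A_ix+B_iu)$ for all $i\in\Sigma$, $x\in\mathbb{R}^n$ makes the closed loop $x(k+1)=A_{\sigma(k)}x(k)+B_{\sigma(k)}\Phi_d(\sigma(k),x(k))$ uniformly exponentially stable, with $V$ as a Lyapunov function: there exists $\tilde\gamma\in[0,1)$ with $V(A_ix+B_i\Phi_d(i,x))\le\tilde\gamma V(x)$ for all $i\in\Sigma$, $x\in\mathbb{R}^n$.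
   Context: Let $\Sigma$ be a finite nonempty set and $\{(A_i,B_i)\in\mathbb{R}^{n\times n}\times\mathbb{R}^{n\times m} : i\in\Sigma\}$. Consider $x(k+1)=A_{\sigma(k)}x(k)+B_{\sigma(k)}u(k)$, $k\in\mathbb{N}=\{0,1,\dots\}$, with arbitrary switching signal $\sigma:\mathbb{N}\to\Sigma$ (set of all such: $\Sigma^\omega$). $\|\cdot\|$ is the Euclidean norm. $\mathcal{H}$ is the set of all tuples $(x_k,\dots,x_0;\,i_k,\dots,i_0)$ with $k\in\mathbb{N}$, $x_j\in\mathbb{R}^n$, $i_j\in\Sigma$. For a function $\Psi:\mathcal{H}\to\mathbb{R}^m$ (a current-mode-dependent controller with memory), $\phi(k,\sigma,x_0,\Psi)$ denotes the closed-loop trajectory defined by $x(0)=x_0$ and $x(k+1)=A_{\sigma(k)}x(k)+B_{\sigma(k)}\Psi(x(k),\dots,x(0);\,\sigma(k),\dots,\sigma(0))$. The system is DFS$_m$ if there exist such $\Psi$ and constants $M>0,\gamma\in[0,1)$ with $\|\phi(k,\sigma,x_0,\Psi)\|\le M\gamma^k\|x_0\|$ for all $x_0\in\mathbb{R}^n,\sigma\in\Sigma^\omega,k\in\mathbb{N}$. A closed loop is uniformly exponentially stable if there exist $M>0,\gamma\in[0,1)$ with $\|x(k)\|\le M\gamma^k\|x(0)\|$ for all initial states, all $\sigma\in\Sigma^\omega$ and all $k\in\mathbb{N}$. *)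

From HB Require Import structures.
From mathcomp Require Import all_boot all_order all_algebra.
From mathcomp Require Import all_classical all_reals all_analysis.
Set Implicit Arguments. Unset Strict Implicit. Unset Printing Implicit Defensive.
Import Order.TTheory GRing.Theory Num.Theory.
Local Open Scope ring_scope.

Section Defs.
Variables (R : realType) (n m : nat) (Sigma : finType).
Variables (A : Sigma -> 'M[R]_n) (B : Sigma -> 'M[R]_(n, m)).

Definition enorm (x : 'cV[R]_n) : R := Num.sqrt (\sum_(i < n) (x i 0) ^+ 2).

(* A current-mode-dependent controller with memory: a function on the set H
   of histories (x_k,...,x_0; i_k,...,i_0).  A history of length k+1 is given
   by two maps on 'I_k.+1, index j holding x_(k-j) resp. i_(k-j)
   (newest first, as in the paper). *)
Definition controller := forall k : nat, ('I_k.+1 -> 'cV[R]_n) -> ('I_k.+1 -> Sigma) -> 'cV[R]_m.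

(* trajf k = the prefix j |-> x(j), valid for j <= k. *)
Fixpoint trajf (sigma : nat -> Sigma) (x0 : 'cV[R]_n) (Psi : controller) (k : nat)
  : nat -> 'cV[R]_n :=
  match k with
  | 0 => fun _ => x0
  | k'.+1 =>
      let f := trajf sigma x0 Psi k' in
      fun j => if (j <= k')%N then f j
               else A (sigma k') *m f k' +
                    B (sigma k') *m Psi k' (fun i : 'I_k'.+1 => f (k' - i)%N)
                                          (fun i : 'I_k'.+1 => sigma (k' - i)%N)
  end.

Definition phi (k : nat) (sigma : nat -> Sigma) (x0 : 'cV[R]_n) (Psi : controller)
  : 'cV[R]_n := trajf sigma x0 Psi k k.

Definition DFSm : Prop :=
  exists (Psi : controller) (M gamma : R), 0 < M /\ 0 <= gamma < 1 /\
    forall (x0 : 'cV[R]_n) (sigma : nat -> Sigma) (k : nat),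
      enorm (phi k sigma x0 Psi) <= M * gamma ^+ k * enorm x0.

Definition Vfun (x0 : 'cV[R]_n) : \bar R :=
  ereal_inf [set (ereal_sup [set (\sum_(0 <= k <oo) (enorm (phi k sigma x0 Psi))%:E)%E
                             | sigma in [set: nat -> Sigma]])
            | Psi in [set: controller]].

Fixpoint cl (Phi : Sigma -> 'cV[R]_n -> 'cV[R]_m) (sigma : nat -> Sigma)
  (x0 : 'cV[R]_n) (k : nat) : 'cV[R]_n :=
  match k with
  | 0 => x0
  | k'.+1 => let x := cl Phi sigma x0 k' in
             A (sigma k') *m x + B (sigma k') *m Phi (sigma k') x
  end.

Definition UES (Phi : Sigma -> 'cV[R]_n -> 'cV[R]_m) : Prop :=
  exists (M gamma : R), 0 < M /\ 0 <= gamma < 1 /\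
    forall (x0 : 'cV[R]_n) (sigma : nat -> Sigma) (k : nat),
      enorm (cl Phi sigma x0 k) <= M * gamma ^+ k * enorm x0.

End Defs.

Definition is_norm (R : realType) (n : nat) (v : 'cV[R]_n -> R) : Prop :=
  [/\ forall x, 0 <= v x,
      forall x, v x = 0 -> x = 0,
      forall (a : R) x, v (a *: x) = `|a| * v x &
      forall x y, v (x + y) <= v x + v y].

From HB Require Import structures.
From mathcomp Require Import all_boot all_order all_algebra.
From mathcomp Require Import all_classical all_reals all_analysis.
From mathcomp Require Import ring lra zify.
Import Order.TTheory GRing.Theory Num.Theory.
Import numFieldNormedType.Exports.
Set Implicit Arguments. Unset Strict Implicit. Unset Printing Implicit Defensive.
Local Open Scope ring_scope.

(* Every trajectory pays at least |x(0)|, while the DFS controller pays at most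
   C |x| with C = M / (1 - gamma); hence V is finite and |x| <= V x <= C |x|.
   The switching history alone determines the state of any controller, so two
   controllers can be blended into one whose cost from a x + b y is at most |a|
   times the first cost plus |b| times the second: V is a norm.  Dominated by
   C |.|, it is continuous and coercive, so u |-> V (A_i x + B_i u) attains its
   minimum.  Splitting off the first step of a trajectory, and conversely
   prefixing one optimal input to nearly optimal controllers, gives the Bellman
   equation, which yields V x+ <= V x - |x| <= (1 - 1/(C + 1)) V x along any
   argmin selection, hence exponential stability. *)

Section EuclideanNorm.
Variables (R : realType) (n : nat).
Implicit Types x y : 'cV[R]_n.

Lemma enorm_ge0 x : 0 <= enorm x.
Proof. exact: sqrtr_ge0. Qed.

Lemma enorm_sqr x : enorm x ^+ 2 = \sum_(i < n) x i 0 ^+ 2.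
Proof. by rewrite sqr_sqrtr // sumr_ge0 // => i _; rewrite sqr_ge0. Qed.

Lemma enormZ (a : R) x : enorm (a *: x) = `|a| * enorm x.
Proof.
rewrite /enorm (eq_bigr (fun i => a ^+ 2 * x i 0 ^+ 2)) => [|i _]; last first.
  by rewrite mxE exprMn.
by rewrite -mulr_sumr sqrtrM ?sqr_ge0 // sqrtr_sqr.
Qed.

Lemma enorm0 : enorm (0 : 'cV[R]_n) = 0.
Proof. by rewrite -(scale0r (0 : 'cV[R]_n)) enormZ normr0 mul0r. Qed.

Lemma enorm_eq0 x : enorm x = 0 -> x = 0.
Proof.
move=> x0; have : \sum_(i < n) x i 0 ^+ 2 == 0 by rewrite -enorm_sqr x0 expr0n.
rewrite psumr_eq0 => [/allP x2_0|i _]; last exact: sqr_ge0.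
apply/matrixP => i j; rewrite (ord1 j) mxE.
by apply/eqP; rewrite -sqrf_eq0; apply: (implyP (x2_0 i (mem_index_enum _))).
Qed.

Lemma dot_le_enorm x y : \sum_(i < n) x i 0 * y i 0 <= enorm x * enorm y.
Proof.
have [x0|x_neq0] := eqVneq (enorm x) 0.
  by rewrite (enorm_eq0 x0) enorm0 mul0r big1 // => i _; rewrite mxE mul0r.
have [y0|y_neq0] := eqVneq (enorm y) 0.
  by rewrite (enorm_eq0 y0) enorm0 mulr0 big1 // => i _; rewrite mxE mulr0.
set s := enorm x; set t := enorm y.
have s_gt0 : 0 < s by rewrite lt0r x_neq0 enorm_ge0.
have t_gt0 : 0 < t by rewrite lt0r y_neq0 enorm_ge0.
(* expand [0 <= \sum_i (t x_i - s y_i)^2] *)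
have : 0 <= \sum_(i < n) (t * x i 0 - s * y i 0) ^+ 2.
  by rewrite sumr_ge0 // => i _; rewrite sqr_ge0.
rewrite (eq_bigr (fun i => t ^+ 2 * x i 0 ^+ 2 + s ^+ 2 * y i 0 ^+ 2
                           - (2 * s * t) * (x i 0 * y i 0))) => [|i _]; last by ring.
rewrite sumrB big_split /= -!mulr_sumr -!enorm_sqr -/s -/t => h.
rewrite -(ler_pM2l (mulr_gt0 s_gt0 t_gt0)); nra.
Qed.

Lemma enormD x y : enorm (x + y) <= enorm x + enorm y.
Proof.
rewrite -(ler_pXn2r (n := 2)) ?nnegrE ?addr_ge0 ?enorm_ge0 //.
rewrite sqrrD !enorm_sqr (eq_bigr (fun i => x i 0 ^+ 2 + y i 0 ^+ 2 + (x i 0 * y i 0) *+ 2)).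
  by rewrite !big_split /= mulr2n; have := dot_le_enorm x y; lra.
by move=> i _; rewrite mxE sqrrD addrAC.
Qed.

End EuclideanNorm.

Section MaxNorm.
Variable R : realType.

Lemma mx_norm_entry_le p q (M : 'M[R]_(p, q)) i j : `|M i j| <= `|M|.
Proof.
change (`|M i j| <= mx_norm M); rewrite mx_normrE.
exact: (le_bigmax _ (fun ij : 'I_p * 'I_q => `|M ij.1 ij.2|) (i, j)).
Qed.

Lemma mx_norm_le p q (M : 'M[R]_(p, q)) b :
  0 <= b -> (forall i j, `|M i j| <= b) -> `|M| <= b.
Proof.
move=> b_ge0 Mb; change (mx_norm M <= b); rewrite mx_normrE.
by apply: bigmax_le => // -[i j] _; exact: Mb.
Qed.

Lemma mx_norm_trmx p q (M : 'M[R]_(p, q)) : `|M^T| = `|M|.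
Proof.
apply/le_anti/andP; split; apply: mx_norm_le => // i j.
  by rewrite mxE mx_norm_entry_le.
by have := mx_norm_entry_le M^T j i; rewrite mxE.
Qed.

Lemma mx_norm_mulmx_le p q r (M : 'M[R]_(p, q)) (N : 'M[R]_(q, r)) :
  `|M *m N| <= q%:R * (`|M| * `|N|).
Proof.
apply: mx_norm_le => [|i j]; first by rewrite mulr_ge0 ?mulr_ge0.
have -> : q%:R * (`|M| * `|N|) = \sum_(k < q) `|M| * `|N|.
  by rewrite sumr_const card_ord mulr_natl.
rewrite mxE; apply: le_trans (ler_norm_sum _ _ _) _.
by apply: ler_sum => k _; rewrite normrM ler_pM ?mx_norm_entry_le.
Qed.

Lemma mx_norm_le_enorm n (x : 'cV[R]_n) : `|x| <= enorm x.
Proof.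
apply: mx_norm_le => [|i j]; first exact: enorm_ge0.
rewrite (ord1 j) -(ler_pXn2r (n := 2)) ?nnegrE ?enorm_ge0 // enorm_sqr.
by rewrite real_normK ?num_real // (bigD1 i) //= lerDl sumr_ge0 // => k _; rewrite sqr_ge0.
Qed.

Lemma enorm_le_mx_norm n (x : 'cV[R]_n) : enorm x <= n%:R * `|x|.
Proof.
rewrite -(ler_pXn2r (n := 2)) ?nnegrE ?enorm_ge0 ?mulr_ge0 // enorm_sqr.
have -> : (n%:R * `|x|) ^+ 2 = \sum_(i < n) n%:R * `|x| ^+ 2.
  by rewrite sumr_const card_ord -[_ *+ n]mulr_natl; ring.
apply: ler_sum => i _; rewrite -real_normK ?num_real //.
apply: (@le_trans _ _ (`|x| ^+ 2)).
  by rewrite ler_pXn2r ?nnegrE // -[x i 0]/(x i ord0) mx_norm_entry_le.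
by rewrite ler_peMl ?sqr_ge0 // ler1n (leq_ltn_trans _ (ltn_ord i)).
Qed.

End MaxNorm.

Lemma lipschitz_continuous (R : realType) (U V : normedModType R) (f : U -> V) (k : R) :
  (forall x y, `|f x - f y| <= k * `|x - y|) -> continuous f.
Proof.
move=> f_lip x; apply/cvgrPdist_lt => e e_gt0; apply/nbhs_normP.
have k1_gt0 : 0 < `|k| + 1 by rewrite ltr_wpDl.
exists (e / (`|k| + 1)); first by rewrite /= divr_gt0.
move=> y /=; rewrite ltr_pdivlMr // => xy; apply: le_lt_trans (f_lip x y) _.
apply: le_lt_trans xy; rewrite mulrC ler_wpM2l //.
by rewrite (le_trans (ler_norm k)) ?lerDl.
Qed.

Lemma mulmx_trmx_pinvmx (F : fieldType) p q (M : 'M[F]_(p, q)) (u : 'cV[F]_q) :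
  M *m ((M *m u)^T *m pinvmx M^T)^T = M *m u.
Proof.
apply: trmx_inj; rewrite trmx_mul trmxK mulmxKpV //.
by rewrite trmx_mul submxMl.
Qed.

Section MinimumOnAffineImage.
Variables (R : realType) (n m : nat) (v : 'cV[R]_n -> R).
Hypotheses (v_cont : continuous v) (mx_norm_le_v : forall x, `|x| <= v x).

Lemma affine_min_attained (c : 'cV[R]_n) (M : 'M[R]_(n, m)) :
  exists u, forall u', v (c + M *m u) <= v (c + M *m u').
Proof.
pose f (r : 'rV[R]_m) := v (c + M *m r^T).
have f_cont : continuous f.
  move=> r; apply: continuous_comp; last exact: v_cont.
  apply: (@lipschitz_continuous _ _ _ _ (m%:R * `|M|)) => {}r r'.
  by rewrite opprD addrACA subrr add0r -mulmxBr -linearB /= -mulrA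
    -(mx_norm_trmx (r - r')) mx_norm_mulmx_le.
(* Through the pseudo-inverse, inputs with [v (c + M u) <= v c] are
   represented by points of the ball [K]. *)
pose rho := n%:R * (`|pinvmx M^T| * (2 * v c)).
pose K := closed_ball_ Num.norm (0 : 'rV[R]_m) rho.
have K_compact : compact K.
  apply: bounded_closed_compact; last exact: closed_closed_ball_.
  exists rho; split; first exact: num_real.
  move=> r rho_r s; rewrite /K /closed_ball_ /= sub0r normrN => s_le.
  by rewrite (le_trans s_le) // ltW.
have K0 : K 0.
  by rewrite /K /closed_ball_ /= subrr normr0 !mulr_ge0 // (le_trans _ (mx_norm_le_v c)).
have [r _ r_min] :=
  compact_EVT_min (ex_intro _ 0 K0) K_compact (continuous_subspaceT f_cont).
exists r^T => u'.
have fr_le : f r <= v c by rewrite (le_trans (r_min 0 _)) ?inE // /f trmx0 mulmx0 addr0.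
have [u'_small|/ltW] := leP (v (c + M *m u')) (v c); last exact: le_trans.
have := r_min ((M *m u')^T *m pinvmx M^T); rewrite /f mulmx_trmx_pinvmx; apply.
rewrite inE /K /closed_ball_ /= sub0r normrN.
apply: le_trans (mx_norm_mulmx_le _ _) _; rewrite mx_norm_trmx.
apply: ler_wpM2l => //; rewrite mulrC; apply: ler_wpM2l => //.
have := ler_normD (c + M *m u') (- c); rewrite addrC addKr normrN.
have := mx_norm_le_v c; have := mx_norm_le_v (c + M *m u'); lra.
Qed.

End MinimumOnAffineImage.

Section Trajectories.
Variables (R : realType) (n m : nat) (Sigma : finType).
Variables (A : Sigma -> 'M[R]_n) (B : Sigma -> 'M[R]_(n, m)).
Local Notation ctrl := (controller R n m Sigma).
Local Notation phi := (phi A B).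
Implicit Types (s : nat -> Sigma) (x : 'cV[R]_n) (P : ctrl).

Lemma trajf_phi s x P k j : (j <= k)%N -> trajf A B s x P k j = phi j s x P.
Proof.
elim: k j => [|k IHk] j; first by rewrite leqn0 => /eqP ->.
by rewrite leq_eqVlt ltnS => /predU1P[-> //|j_le_k]; rewrite /= j_le_k IHk.
Qed.

Lemma phiS s x P k :
  phi k.+1 s x P = A (s k) *m phi k s x P +
    B (s k) *m P k (fun i : 'I_k.+1 => phi (k - i) s x P) (fun i : 'I_k.+1 => s (k - i)%N).
Proof.
rewrite {1}/phi /= ltnn trajf_phi //; congr (_ + _ *m P k _ _).
by apply: funext => i; rewrite trajf_phi // leq_subr.
Qed.

Lemma phi_causal s s' x P k :
  (forall j, (j < k)%N -> s j = s' j) -> phi k s x P = phi k s' x P.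
Proof.
elim/ltn_ind: k => -[//|k] IHk ss'; rewrite !phiS ss' //.
have phi_eq k' : (k' <= k)%N -> phi k' s x P = phi k' s' x P.
  move=> k'_le; apply: IHk => [|j j_lt]; first by rewrite ltnS.
  by apply: ss'; rewrite (leq_trans j_lt) // ltnW.
rewrite phi_eq //; congr (_ + _ *m P k _ _); apply: funext => i.
  by rewrite phi_eq // leq_subr.
by rewrite ss' // ltnS leq_subr.
Qed.

End Trajectories.

Section Controllers.
Variables (R : realType) (n m : nat) (Sigma : finType).
Variables (A : Sigma -> 'M[R]_n) (B : Sigma -> 'M[R]_(n, m)).
Local Notation ctrl := (controller R n m Sigma).
Local Notation phi := (phi A B).
Implicit Types (s : nat -> Sigma) (x y : 'cV[R]_n) (P : ctrl).

Definition hist_signal k (ms : 'I_k.+1 -> Sigma) : nat -> Sigma :=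
  fun j => ms (inord (k - j)).

Lemma hist_signalE k s j : (j <= k)%N ->
  hist_signal (fun i : 'I_k.+1 => s (k - i)%N) j = s j.
Proof. by move=> j_le_k; rewrite /hist_signal inordK ?ltnS ?leq_subr // subKn. Qed.

Lemma phi_hist_signal k s x P (i : 'I_k.+1) :
  phi (k - i) (hist_signal (fun i : 'I_k.+1 => s (k - i)%N)) x P = phi (k - i) s x P.
Proof.
apply: phi_causal => j j_lt; apply: hist_signalE.
by rewrite ltnW // (leq_trans j_lt) // leq_subr.
Qed.

(* The modes seen so far determine the states of any controller, so the
   controller below can replay [P1] from [x] and [P2] from [y]. *)
Definition ctrl_comb (a b : R) x y P1 P2 : ctrl := fun k _ ms =>
  a *: P1 k (fun i : 'I_k.+1 => phi (k - i) (hist_signal ms) x P1) ms +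
  b *: P2 k (fun i : 'I_k.+1 => phi (k - i) (hist_signal ms) y P2) ms.

Lemma phi_comb a b x y P1 P2 s k :
  phi k s (a *: x + b *: y) (ctrl_comb a b x y P1 P2) =
  a *: phi k s x P1 + b *: phi k s y P2.
Proof.
elim: k => [//|k IHk]; rewrite !phiS IHk /ctrl_comb.
under eq_fun do rewrite phi_hist_signal; under [X in P2 _ X]eq_fun do rewrite phi_hist_signal.
rewrite !mulmxDr !scalerDr !scalemxAr -!addrA; congr (_ + _).
by rewrite addrCA addrC.
Qed.

(* Input [u i] at time 0, where [i = ms ord_max] is the first mode, then [Ps i]
   run on the history with its first step removed. *)
Definition ctrl_cons (u : Sigma -> 'cV[R]_m) (Ps : Sigma -> ctrl) x : ctrl := fun k =>
  match k return ('I_k.+1 -> 'cV[R]_n) -> ('I_k.+1 -> Sigma) -> 'cV[R]_m with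
  | 0 => fun _ ms => u (ms ord0)
  | k'.+1 => fun _ ms =>
      let i := ms ord_max in
      Ps i k'
        (fun j : 'I_k'.+1 =>
           phi (k' - j) (fun l => hist_signal ms l.+1) (A i *m x + B i *m u i) (Ps i))
        (fun j : 'I_k'.+1 => ms (widen_ord (leqnSn _) j))
  end.

Lemma phi_cons u Ps x s k :
  phi k.+1 s x (ctrl_cons u Ps x) =
  phi k (fun j => s j.+1) (A (s 0%N) *m x + B (s 0%N) *m u (s 0%N)) (Ps (s 0%N)).
Proof.
elim: k => [|k IHk]; first by rewrite phiS.
rewrite phiS IHk [in RHS]phiS /= subnn; congr (_ + _ *m Ps _ k _ _); apply: funext => i.
  apply: phi_causal => j j_lt; rewrite /= hist_signalE //.
  by rewrite (leq_trans j_lt) // (leq_trans (leq_subr _ _)).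
by rewrite /= subSn // -ltnS.
Qed.

Definition scons (i : Sigma) (s : nat -> Sigma) : nat -> Sigma :=
  fun j => if j is j'.+1 then s j' else i.

(* What [P] does after a first step in mode [i]. *)
Definition ctrl_tail x (i : Sigma) P : ctrl := fun k _ ms =>
  P k.+1 (fun j : 'I_k.+2 => phi (k.+1 - j) (scons i (hist_signal ms)) x P)
         (fun j : 'I_k.+2 => if (j <= k)%N then ms (inord j) else i).

Lemma phi_tail x i P s k :
  phi k.+1 (scons i s) x P =
  phi k s (A i *m x + B i *m P 0%N (fun _ => x) (fun _ => i)) (ctrl_tail x i P).
Proof.
elim: k => [|k IHk].
  by rewrite phiS /=; congr (_ + _ *m P 0%N _ _); apply: funext => j; rewrite sub0n.
rewrite phiS IHk [in RHS]phiS /ctrl_tail /=.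
congr (_ + _ *m P k.+1 _ _); apply: funext => j.
  apply: phi_causal => -[//|l] l_lt /=; rewrite hist_signalE //; lia.
case: ifP => [j_le|/negbT]; first by rewrite inordK ?ltnS // subSn.
by rewrite -ltnNge => j_gt; rewrite (@anti_leq j k.+1) ?subnn // j_gt andbT -ltnS.
Qed.

End Controllers.

Section Costs.
Variables (R : realType) (n m : nat) (Sigma : finType).
Variables (A : Sigma -> 'M[R]_n) (B : Sigma -> 'M[R]_(n, m)).
Local Notation ctrl := (controller R n m Sigma).
Local Notation phi := (phi A B).
Implicit Types (s : nat -> Sigma) (x y : 'cV[R]_n) (P : ctrl).

Definition cost s x P : \bar R := (\sum_(0 <= k <oo) (enorm (phi k s x P))%:E)%E.

Definition worst_cost x P : \bar R := ereal_sup [set cost s x P | s in [set: nat -> Sigma]].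

Lemma VfunE x : Vfun A B x = ereal_inf [set worst_cost x P | P in [set: ctrl]].
Proof. by []. Qed.

Lemma cost_le_worst s x P : (cost s x P <= worst_cost x P)%E.
Proof. by apply: ereal_sup_ubound; exists s. Qed.

Lemma costE s x P :
  cost s x P = ((enorm x)%:E + \sum_(0 <= k <oo) (enorm (phi k.+1 s x P))%:E)%E.
Proof.
have enorm_ge0E k : (0 <= (enorm (phi k s x P))%:E)%E by rewrite lee_fin enorm_ge0.
rewrite /cost (nneseries_recl (P := xpredT)) // -(nneseries_addn 1) //.
by under eq_fun do under eq_bigr do rewrite addn1.
Qed.

Lemma enorm_le_cost s x P : ((enorm x)%:E <= cost s x P)%E.
Proof. by rewrite costE leeDl // nneseries_ge0 // => k _ _; rewrite lee_fin enorm_ge0. Qed.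

Lemma cost_comb a b x y P1 P2 s :
  (cost s (a *: x + b *: y) (ctrl_comb A B a b x y P1 P2) <=
    `|a|%:E * cost s x P1 + `|b|%:E * cost s y P2)%E.
Proof.
have enorm_ge0E z P k : (0 <= (enorm (phi k s z P))%:E)%E by rewrite lee_fin enorm_ge0.
rewrite /cost -!nneseriesZl // -nneseriesD => [|k _ _|k _ _]; try by rewrite mule_ge0.
apply: lee_nneseries => [k _ _|k _]; first by rewrite lee_fin enorm_ge0.
by rewrite phi_comb -!EFinM -EFinD lee_fin -!enormZ enormD.
Qed.

Lemma worst_comb a b x y P1 P2 :
  (worst_cost (a *: x + b *: y) (ctrl_comb A B a b x y P1 P2) <=
    `|a|%:E * worst_cost x P1 + `|b|%:E * worst_cost y P2)%E.
Proof.
apply: ge_ereal_sup => _ [s _ <-]; apply: le_trans (cost_comb _ _ _ _ _ _ _) _.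
by apply: leeD; apply: lee_wpmul2l; rewrite ?lee_fin ?cost_le_worst.
Qed.

Lemma cost_cons u Ps s x :
  cost s x (ctrl_cons A B u Ps x) = ((enorm x)%:E +
    cost (fun j => s j.+1) (A (s 0%N) *m x + B (s 0%N) *m u (s 0%N)) (Ps (s 0%N)))%E.
Proof. by rewrite costE; under eq_fun do under eq_bigr do rewrite phi_cons. Qed.

Lemma cost_tail i s x P :
  cost (scons i s) x P = ((enorm x)%:E +
    cost s (A i *m x + B i *m P 0%N (fun _ => x) (fun _ => i)) (ctrl_tail A B x i P))%E.
Proof. by rewrite costE; under eq_fun do under eq_bigr do rewrite phi_tail. Qed.

Lemma worst_tail i x P :
  ((enorm x)%:E +
    worst_cost (A i *m x + B i *m P 0%N (fun _ => x) (fun _ => i)) (ctrl_tail A B x i P)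
   <= worst_cost x P)%E.
Proof.
rewrite -leeBrDl //; apply: ge_ereal_sup => _ [s _ <-].
by rewrite leeBrDl // -cost_tail cost_le_worst.
Qed.

End Costs.

Lemma geometric_sum_le (R : realFieldType) (g : R) N :
  0 <= g < 1 -> \sum_(i < N) g ^+ i <= (1 - g)^-1.
Proof.
case/andP=> g_ge0 g_lt1; have g1_gt0 : 0 < 1 - g by rewrite subr_gt0.
rewrite -(ler_pM2r g1_gt0) mulVf ?gt_eqF // mulrC -opprB mulNr -subrX1 opprB.
by rewrite gerBl exprn_ge0.
Qed.

Section DFSCost.
Variables (R : realType) (n m : nat) (Sigma : finType).
Variables (A : Sigma -> 'M[R]_n) (B : Sigma -> 'M[R]_(n, m)).

Lemma DFSm_worst_cost : DFSm A B ->
  exists (C : R) (P : controller R n m Sigma),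
    0 <= C /\ forall x, (worst_cost A B x P <= (C * enorm x)%:E)%E.
Proof.
case=> P [M [g [M_gt0 [g01 Pstable]]]]; exists (M / (1 - g)), P.
have g1_gt0 : 0 < 1 - g by case/andP: g01 => _; rewrite subr_gt0.
split=> [|x]; first by rewrite divr_ge0 // ltW.
apply: ge_ereal_sup => _ [s _ <-]; apply: lime_le.
  by apply: is_cvg_nneseries => k _ _; rewrite lee_fin enorm_ge0.
apply: nearW => N; rewrite sumEFin lee_fin.
apply: le_trans (ler_sum _ (fun k _ => Pstable x s k)) _.
rewrite big_mkord -mulr_suml -mulr_sumr ler_wpM2r ?enorm_ge0 // ler_wpM2l ?(ltW M_gt0) //.
exact: geometric_sum_le.
Qed.

End DFSCost.

Section DominatedSeminorm.
Variables (R : realType) (n : nat) (v : 'cV[R]_n -> R) (C : R).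
Hypotheses (C_ge0 : 0 <= C) (v_le : forall x, v x <= C * enorm x).
Hypotheses (vD : forall x y, v (x + y) <= v x + v y) (vZ : forall a x, v (a *: x) = `|a| * v x).

Lemma seminorm_dist_le x y : `|v x - v y| <= v (x - y).
Proof.
have vN z : v (- z) = v z by rewrite -scaleN1r vZ normrN1 mul1r.
have le_x : v x <= v (x - y) + v y by rewrite (le_trans _ (vD _ _)) ?subrK.
have le_y : v y <= v (x - y) + v x.
  by rewrite -[v (x - y)]vN opprB (le_trans _ (vD _ _)) ?subrK.
by rewrite ler_norml lerNl opprB !lerBlDr le_x le_y.
Qed.

Lemma dominated_seminorm_continuous : continuous v.
Proof.
apply: (@lipschitz_continuous _ _ _ _ (C * n%:R)) => x y; rewrite -mulrA.
exact: le_trans (seminorm_dist_le x y) (le_trans (v_le _) (ler_wpM2l C_ge0 (enorm_le_mx_norm _))).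
Qed.

End DominatedSeminorm.

Section ValueFunction.
Variables (R : realType) (n m : nat) (Sigma : finType).
Variables (A : Sigma -> 'M[R]_n) (B : Sigma -> 'M[R]_(n, m)).
Variables (i0 : Sigma) (C : R) (P0 : controller R n m Sigma).
Hypotheses (C_ge0 : 0 <= C) (P0_cost : forall x, (worst_cost A B x P0 <= (C * enorm x)%:E)%E).
Local Notation ctrl := (controller R n m Sigma).
Local Notation V := (Vfun A B).
Local Notation worst_cost := (worst_cost A B).
Implicit Types (x y : 'cV[R]_n) (u : 'cV[R]_m) (P : ctrl).

Lemma Vfun_le_worst x P : (V x <= worst_cost x P)%E.
Proof. by apply: ereal_inf_lbound; exists P. Qed.

Lemma enorm_le_Vfun x : ((enorm x)%:E <= V x)%E.
Proof.
apply/ereal_infP => _ [P _ <-].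
exact: le_trans (enorm_le_cost _ _ (fun=> i0) _ _) (cost_le_worst _ _ _ _ _).
Qed.

Lemma Vfun_real : exists v : 'cV[R]_n -> R, forall x, V x = (v x)%:E.
Proof.
exists (fun x => fine (V x)) => x.
have := le_trans (Vfun_le_worst x P0) (P0_cost x); have := enorm_le_Vfun x.
by case: (V x).
Qed.

(* From here on [V] is accessed through an arbitrary real representative [v]:
   letting the unifier unfold [fine (V x)] is prohibitively slow. *)
Variable v : 'cV[R]_n -> R.
Hypothesis Vfun_v : forall x, V x = (v x)%:E.

Lemma enorm_le_v x : enorm x <= v x.
Proof. by rewrite -lee_fin -Vfun_v enorm_le_Vfun. Qed.

Lemma v_le x : v x <= C * enorm x.
Proof. by rewrite -lee_fin -Vfun_v (le_trans (Vfun_le_worst x P0)). Qed.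

Lemma v_le_worst x P : ((v x)%:E <= worst_cost x P)%E.
Proof. by rewrite -Vfun_v Vfun_le_worst. Qed.

Lemma v_approx x e : 0 < e -> exists P, (worst_cost x P <= (v x + e)%:E)%E.
Proof.
move=> e_gt0; have [|_ [P _ <-] P_lt] :=
  lb_ereal_inf_adherent e_gt0 (S := [set worst_cost x P | P in [set: ctrl]]).
  by rewrite -VfunE Vfun_v.
by exists P; rewrite -VfunE Vfun_v -EFinD in P_lt; rewrite ltW.
Qed.

Lemma v_comb a b x y : v (a *: x + b *: y) <= `|a| * v x + `|b| * v y.
Proof.
apply/ler_addgt0Pr => e e_gt0; pose k : R := `|a| + `|b| + 1.
have k_gt0 : 0 < k by rewrite ltr_wpDl ?addr_ge0.
have ek_gt0 : 0 < e / k by rewrite divr_gt0.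
have [P1 P1_le] := v_approx x ek_gt0; have [P2 P2_le] := v_approx y ek_gt0.
have comb_le := le_trans (v_le_worst (a *: x + b *: y) (ctrl_comb A B a b x y P1 P2))
  (worst_comb A B a b x y P1 P2).
have a_ge0 : (0 <= `|a|%:E)%E by rewrite lee_fin.
have b_ge0 : (0 <= `|b|%:E)%E by rewrite lee_fin.
have := leeD (lee_wpmul2l a_ge0 P1_le) (lee_wpmul2l b_ge0 P2_le).
move=> /(le_trans comb_le); rewrite -!EFinM -EFinD lee_fin => /le_trans; apply.
rewrite !mulrDr addrACA -(mulrDl `|a| `|b| (e / k)) lerD2l mulrA ler_pdivrMr //.
by rewrite [X in X <= _]mulrC ler_wpM2l ?(ltW e_gt0) // lerDl.
Qed.

Lemma v_ge0 x : 0 <= v x.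
Proof. exact: le_trans (enorm_ge0 x) (enorm_le_v x). Qed.

Lemma vZ a x : v (a *: x) = `|a| * v x.
Proof.
have vZ_le b y : v (b *: y) <= `|b| * v y.
  by have := v_comb b 0 y 0; rewrite scaler0 addr0 normr0 mul0r addr0.
apply/le_anti; rewrite vZ_le /=.
have [->|a_neq0] := eqVneq a 0; first by rewrite normr0 mul0r v_ge0.
have := vZ_le a^-1 (a *: x); rewrite scalerA mulVf // scale1r normrV ?unitfE //.
by rewrite ler_pdivlMl ?normr_gt0.
Qed.

Lemma vD x y : v (x + y) <= v x + v y.
Proof. by have := v_comb 1 1 x y; rewrite !scale1r normr1 !mul1r. Qed.

Lemma v_is_norm : is_norm v.
Proof.
split=> [|x x0||]; [exact: v_ge0| |exact: vZ|exact: vD].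
by apply: enorm_eq0; apply/le_anti; rewrite enorm_ge0 -x0 enorm_le_v.
Qed.

Lemma v_min_attained (c : 'cV[R]_n) (M : 'M[R]_(n, m)) :
  exists u, forall u', v (c + M *m u) <= v (c + M *m u').
Proof.
apply: affine_min_attained; first exact: dominated_seminorm_continuous C_ge0 v_le vD vZ.
by move=> x; rewrite (le_trans (mx_norm_le_enorm x)) ?enorm_le_v.
Qed.

Local Notation next i x u := (A i *m x + B i *m u).
Definition is_argmin i x u := forall u', v (next i x u) <= v (next i x u').

Lemma Vfun_next_inf i x u : is_argmin i x u ->
  ereal_inf [set V (next i x u') | u' in [set: 'cV[R]_m]] = (v (next i x u))%:E.
Proof.
move=> u_min; apply/le_anti/andP; split.
  by apply: ereal_inf_lbound; exists u => //; rewrite Vfun_v.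
by apply/ereal_infP => _ [u' _ <-]; rewrite Vfun_v lee_fin u_min.
Qed.

Lemma enorm_add_argmin_le i x u : is_argmin i x u -> enorm x + v (next i x u) <= v x.
Proof.
move=> u_min; rewrite -lee_fin -Vfun_v; apply/ereal_infP => _ [P _ <-].
apply: (le_trans _ (worst_tail A B i x P)); rewrite EFinD leeD2l //.
by apply: le_trans (v_le_worst _ _); rewrite lee_fin u_min.
Qed.

Lemma v_le_enorm_add x (u : Sigma -> 'cV[R]_m) b :
  (forall i, v (next i x (u i)) <= b) -> v x <= enorm x + b.
Proof.
move=> u_le; apply/ler_addgt0Pr => e e_gt0.
have [Ps Ps_le] := choice (fun i => v_approx (next i x (u i)) e_gt0).
rewrite -lee_fin; apply: le_trans (v_le_worst x (ctrl_cons A B u Ps x)) _.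
apply: ge_ereal_sup => _ [s _ <-]; rewrite cost_cons -addrA EFinD leeD2l //.
apply: le_trans (cost_le_worst _ _ _ _ _) (le_trans (Ps_le (s 0%N)) _).
by rewrite lee_fin lerD2r.
Qed.

Lemma Vfun_bellman x :
  V x = ((enorm x)%:E + \big[maxe/-oo%E]_(i : Sigma)
           ereal_inf [set V (next i x u) | u in [set: 'cV[R]_m]])%E.
Proof.
have [u u_min] := choice (fun i => v_min_attained (A i *m x) (B i)).
under eq_bigr do rewrite (Vfun_next_inf (u_min _)).
pose F i := (v (next i x (u i)))%:E.
have [j _ F_max] := @eq_bigmax _ _ Sigma -oo%E i0 xpredT F isT (fun i _ => leNye _).
rewrite F_max Vfun_v -EFinD; congr _%:E; apply/le_anti/andP; split.
  apply: v_le_enorm_add => i; rewrite -lee_fin -/(F i) -/(F j) -F_max.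
  exact: le_bigmax.
exact: enorm_add_argmin_le.
Qed.

Definition decay_rate : R := 1 - (C + 1)^-1.

Lemma decay_rate_itv : 0 <= decay_rate < 1.
Proof.
have C1_ge1 : 1 <= C + 1 by rewrite lerDr.
by rewrite subr_ge0 gtrBl invr_gt0 invf_le1 ?(lt_le_trans ltr01) ?C1_ge1.
Qed.

Lemma v_le_C1 x : v x <= (C + 1) * enorm x.
Proof. by rewrite (le_trans (v_le x)) // ler_wpM2r ?enorm_ge0 ?lerDl. Qed.

Lemma v_argmin_decay i x u : is_argmin i x u -> v (next i x u) <= decay_rate * v x.
Proof.
move=> u_min; have C1_gt0 : 0 < C + 1 by rewrite ltr_wpDl.
have v_div_le : v x / (C + 1) <= enorm x by rewrite ler_pdivrMr // mulrC v_le_C1.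
rewrite /decay_rate mulrBl mul1r mulrC lerBrDr.
by rewrite (le_trans _ (enorm_add_argmin_le u_min)) // addrC lerD2r.
Qed.

Lemma argmin_UES (Phi : Sigma -> 'cV[R]_n -> 'cV[R]_m) :
  (forall i x, is_argmin i x (Phi i x)) -> UES A B Phi.
Proof.
move=> Phi_min; have /andP[rate_ge0 _] := decay_rate_itv.
exists (C + 1), decay_rate; split; first by rewrite ltr_wpDl.
split=> [|x0 s k]; first exact: decay_rate_itv.
have v_cl : v (cl A B Phi s x0 k) <= decay_rate ^+ k * v x0.
  elim: k => [|k IHk] /=; first by rewrite expr0 mul1r.
  rewrite exprS -mulrA; apply: le_trans (v_argmin_decay (Phi_min _ _)) _.
  by apply: ler_wpM2l.
apply: le_trans (enorm_le_v _) (le_trans v_cl _).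
rewrite [(C + 1) * _]mulrC -mulrA; apply: ler_wpM2l; last exact: v_le_C1.
exact: exprn_ge0.
Qed.

End ValueFunction.

Theorem mainTheorem6 (R : realType) (n m : nat) (Sigma : finType)
  (A : Sigma -> 'M[R]_n) (B : Sigma -> 'M[R]_(n, m))
  (HSigma : (0 < #|Sigma|)%N) :
  DFSm A B ->
  let V := Vfun A B in
  [/\ (* V is real-valued and a norm *)
      exists v : 'cV[R]_n -> R, (forall x, V x = (v x)%:E) /\ is_norm v,
      (* the minima are attained *)
      forall (i : Sigma) (x : 'cV[R]_n), exists u : 'cV[R]_m,
        forall u' : 'cV[R]_m, (V (A i *m x + B i *m u)%R <= V (A i *m x + B i *m u')%R)%E,
      (* Bellman equation *)
      forall x : 'cV[R]_n,
        V x = ((enorm x)%:E +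
               \big[maxe/-oo%E]_(i : Sigma)
                  ereal_inf [set V (A i *m x + B i *m u)%R | u in [set: 'cV[R]_m]])%E &
      (* any argmin selection is stabilizing, with V as Lyapunov function *)
      forall Phi : Sigma -> 'cV[R]_n -> 'cV[R]_m,
        (forall (i : Sigma) (x : 'cV[R]_n) (u : 'cV[R]_m),
           (V (A i *m x + B i *m Phi i x)%R <= V (A i *m x + B i *m u)%R)%E) ->
        UES A B Phi /\
        exists gt : R, 0 <= gt < 1 /\
          forall (i : Sigma) (x : 'cV[R]_n),
            (V (A i *m x + B i *m Phi i x)%R <= gt%:E * V x)%E].
Proof.
move=> /DFSm_worst_cost[C [P0 [C_ge0 P0_cost]]] V; rewrite {}/V.
have /card_gt0P[i0 _] := HSigma.
have [v Vfun_v] := Vfun_real i0 P0_cost.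
have argminE i x u : is_argmin A B v i x u <->
    forall u', (Vfun A B (A i *m x + B i *m u) <= Vfun A B (A i *m x + B i *m u'))%E.
  by split=> u_min u'; move: (u_min u'); rewrite !Vfun_v lee_fin.
split.
- by exists v; split=> //; exact: (v_is_norm i0 Vfun_v).
- move=> i x; have [u /argminE] := v_min_attained i0 C_ge0 P0_cost Vfun_v (A i *m x) (B i).
  by exists u.
- exact: (Vfun_bellman i0 C_ge0 P0_cost Vfun_v).
- move=> Phi Phi_min; have {}Phi_min i x : is_argmin A B v i x (Phi i x) by apply/argminE.
  split; first exact: (argmin_UES i0 C_ge0 P0_cost Vfun_v Phi_min).
  exists (decay_rate C); split=> [|i x]; first exact: decay_rate_itv.
  by rewrite !Vfun_v -EFinM lee_fin (v_argmin_decay C_ge0 P0_cost Vfun_v (Phi_min i x)).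
Qed.
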